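(* Let $\mathcal Q=(\mathcal G,\mathcal C)$ be a CWS code in standard form with $K=|\mathcal C|\ge2$ and distance $d$. Let $(\mathcal G',\mathcal C')$ be any CWS code in standard form that is LC-equivalent to $\mathcal Q$ (in particular $(\mathcal G',\mathcal C')=(\mathcal G,\mathcal C)$ is allowed), and let $S'_i=X_iZ^{\mathbf r'_i}$ be the graph-stabilizer generators of $\mathcal G'$. Then $d$ is at most the $d$-th largest of the numbers $\mathrm{wgt}(S'_1),\dots,\mathrm{wgt}(S'_n)$ (where $\mathrm{wgt}(S'_i)=1+\deg_{\mathcal G'}(i)$). In other words, $d$ is bounded by the $d$-th largest weight of the $S_i$, minimized over all such graphs $\mathcal G'$ (which range over graphs locally equivalent to $\mathcal G$).
   Context: A Pauli operator on $n$ qubits is, up to a phase, $X^{\mathbf v}Z^{\mathbf u}=X_1^{v_1}\cdots X_n^{v_n}Z_1^{u_1}\cdots Z_n^{u_n}$ with $\mathbf v,\mathbf u\in\{0,1\}^n$; its weight is the number of qubits on which it acts as a non-identity operator. For a subspace $\mathcal Q\subseteq(\mathbb C^2)^{\otimes n}$ with orthonormal basis $\{|i\rangle\}$, a Pauli operator $E$ is detectable if $\langle j|E|i\rangle=C_E\delta_{ij}$ for all $i,j$, with $C_E$ independent of $i,j$; the distance of $\mathcal Q$ is the smallest weight of a non-detectable Pauli operator. Let $\mathcal G$ be a simple graph on vertex set $\{1,\dots,n\}$ with adjacency matrix $R\in\{0,1\}^{n\times n}$ (symmetric, zero diagonal) and rows $\mathbf r_i$. The graph-stabilizer generators are $S_i=X_iZ^{\mathbf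 r_i}$, $i=1,\dots,n$; they commute, generate an abelian group $\mathscr S_{\mathcal G}$, and stabilize a unique (up to phase) state $|s\rangle$, the graph state. For a binary code $\mathcal C\subseteq\{0,1\}^n$ with $K$ words, the CWS code in standard form is $\mathcal Q=(\mathcal G,\mathcal C)=\operatorname{span}\{Z^{\mathbf c}|s\rangle:\mathbf c\in\mathcal C\}$; it has dimension $K$. Two quantum codes are LC-equivalent if one is mapped onto the other by a qubit permutation followed by a tensor product of single-qubit Clifford unitaries; LC-equivalent codes have equal distance. Two graphs are locally equivalent if one is obtained from the other by a sequence of local complementations (replacing the subgraph induced on the neighbourhood of a vertex by its complement) and graph isomorphisms. *)

From HB Require Import structures.
From mathcomp Require Import all_boot all_order all_algebra all_fingroup all_field.
Set Implicit Arguments. Unset Strict Implicit. Unset Printing Implicit Defensive.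
Import Order.TTheory GRing.Theory Num.Theory.
Local Open Scope ring_scope.

(* binary vectors of length n (computational basis labels / Pauli exponents) *)
Definition bvec (n : nat) := {ffun 'I_n -> bool}.
(* states of n qubits: amplitude functions on the computational basis *)
Definition state (n : nat) := bvec n -> algC.

Definition bxor n (x y : bvec n) : bvec n := [ffun i => x i (+) y i].
Definition dotb n (u x : bvec n) : bool := \big[addb/false]_(i < n) (u i && x i).
Definition bzero n : bvec n := [ffun _ => false].

(* the Pauli operator X^v Z^u acting on a state:
   X^v Z^u (sum_x f(x)|x>) = sum_x (-1)^(u.x) f(x) |x + v> *)
Definition pauli_app n (v u : bvec n) (f : state n) : state n :=
  fun y => (-1) ^+ (dotb u (bxor y v)) * f (bxor y v).

Definition pweight n (v u : bvec n) : nat := #|[pred i | v i || u i]|.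

Definition inner n (f g : state n) : algC := \sum_(x : bvec n) (f x)^* * g x.

Definition is_graph n (R : 'I_n -> 'I_n -> bool) : Prop :=
  (forall i j, R i j = R j i) /\ (forall i, R i i = false).

Definition unitv n (i : 'I_n) : bvec n := [ffun j => j == i].
Definition adjrow n (R : 'I_n -> 'I_n -> bool) (i : 'I_n) : bvec n := [ffun j => R i j].

Definition gen_app n (R : 'I_n -> 'I_n -> bool) (i : 'I_n) : state n -> state n :=
  pauli_app (unitv i) (adjrow R i).
Definition gen_weight n (R : 'I_n -> 'I_n -> bool) (i : 'I_n) : nat :=
  pweight (unitv i) (adjrow R i).

(* s is the graph state of R (normalized, stabilized by all S_i; unique up to phase) *)
Definition graph_state n (R : 'I_n -> 'I_n -> bool) (s : state n) : Prop :=
  (forall i, gen_app R i s = s) /\ inner s s = 1.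

(* basis vectors Z^c |s> of the CWS code (G, C) in standard form *)
Definition cws_vec n (s : state n) (c : bvec n) : state n := pauli_app (bzero n) c s.

Definition detectable n (C : {set bvec n}) (B : bvec n -> state n)
    (E : state n -> state n) : Prop :=
  exists cE : algC, forall c c', c \in C -> c' \in C ->
    inner (B c') (E (B c)) = if c == c' then cE else 0.

Definition is_distance n (C : {set bvec n}) (B : bvec n -> state n) (d : nat) : Prop :=
  (exists v u : bvec n, pweight v u = d /\ ~ detectable C B (pauli_app v u)) /\
  (forall v u : bvec n, (pweight v u < d)%N -> detectable C B (pauli_app v u)).

Definition in_span n (C : {set bvec n}) (B : bvec n -> state n) (f : state n) : Prop :=
  exists a : bvec n -> algC, forall x, f x = \sum_(c in C) a c * B c x.

Definition bit_ord (b : bool) : 'I_2 := if b then ord_max else ord0.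
Definition pX : 'M[algC]_2 := \matrix_(i < 2, j < 2) ((i != j)%:R).
Definition pZ : 'M[algC]_2 := \matrix_(i < 2, j < 2) ((i == j)%:R * (-1) ^+ (i : nat)).
Definition pmx (a b : bool) : 'M[algC]_2 :=
  (if a then pX else 1%:M) *m (if b then pZ else 1%:M).
Definition adj2 (U : 'M[algC]_2) : 'M[algC]_2 := (map_mx Num.conj U)^T.
Definition clifford1 (U : 'M[algC]_2) : Prop :=
  U *m adj2 U = 1%:M /\
  forall a b : bool, exists (a' b' : bool) (c : algC), U *m pmx a b *m adj2 U = c *: pmx a' b'.

Definition perm_op n (p : 'S_n) (f : state n) : state n :=
  fun x => f [ffun i => x (p i)].
Definition local_op n (U : 'I_n -> 'M[algC]_2) (f : state n) : state n :=
  fun x => \sum_(y : bvec n) (\prod_(k < n) U k (bit_ord (x k)) (bit_ord (y k))) * f y.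

Definition LC_equiv n (C : {set bvec n}) (B : bvec n -> state n)
    (C' : {set bvec n}) (B' : bvec n -> state n) : Prop :=
  exists (p : 'S_n) (U : 'I_n -> 'M[algC]_2),
    (forall k, clifford1 (U k)) /\
    (forall f, in_span C B f -> in_span C' B' (local_op U (perm_op p f))) /\
    (forall g, in_span C' B' g -> exists f, in_span C B f /\ g = local_op U (perm_op p f)).

(* the d-th largest (1-indexed) of the generator weights wgt(S_1),...,wgt(S_n) *)
Definition dth_largest_gen_weight n (R : 'I_n -> 'I_n -> bool) (d : nat) : nat :=
  nth 0%N (sort geq [seq gen_weight R i | i <- enum 'I_n]) d.-1.

(* The proof has three ingredients.
   1. The basis vectors Z^c|s> of a CWS code are orthonormal (the graph state
      is invariant under every X_i Z^{r_i}, which pairs up x and x + e_i with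
      opposite signs in <Z^c s, Z^c' s> when c_i <> c'_i).
   2. An LC map T (permutation followed by local Cliffords) is unitary and
      satisfies P' T = lambda T P for every Pauli P', with P a Pauli of the
      same weight; hence every Pauli of weight < d is detectable on (G', C'),
      and (G', C') again has two distinct codewords x1 <> x2.
   3. If S'_i has weight < d it is detectable, and <Z^c s'|S'_i|Z^c s'> equals
      (-1)^(c_i); so all codewords of C' agree at i.  Thus x1 + x2 is
      supported on the "heavy" qubits i with wgt(S'_i) >= d.  If the d-th
      largest weight were < d there would be fewer than d heavy qubits, so
      Z^(x1+x2), which maps Z^x2 s' to Z^x1 s', would be an undetectable
      Pauli of weight < d: a contradiction. *)
From HB Require Import structures.
From mathcomp Require Import all_boot all_order all_algebra all_fingroup all_field.
From mathcomp Require Import ring.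
Set Implicit Arguments. Unset Strict Implicit. Unset Printing Implicit Defensive.
Import Order.TTheory GRing.Theory Num.Theory.
Local Open Scope ring_scope.

Section BitVectors.
Variable n : nat.
Implicit Types (u v w x y : bvec n).

Lemma bxorK x y : bxor (bxor x y) y = x.
Proof. by apply/ffunP=> i; rewrite !ffunE addbK. Qed.

Lemma bxor_inj y : injective (fun x => bxor x y).
Proof. by move=> a b /= eq_ab; rewrite -(bxorK a y) eq_ab bxorK. Qed.

Lemma bxor0 x : bxor x (bzero n) = x.
Proof. by apply/ffunP=> i; rewrite !ffunE addbF. Qed.

Lemma dotbDr u x y : dotb u (bxor x y) = dotb u x (+) dotb u y.
Proof.
rewrite /dotb -big_split /=; apply: eq_bigr => i _; rewrite ffunE.
by case: (u i); case: (x i); case: (y i).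
Qed.

Lemma dotbDl u w x : dotb (bxor u w) x = dotb u x (+) dotb w x.
Proof.
rewrite /dotb -big_split /=; apply: eq_bigr => i _; rewrite ffunE.
by case: (u i); case: (x i); case: (w i).
Qed.

Lemma dotb0l x : dotb (bzero n) x = false.
Proof. by rewrite /dotb big1 // => i _; rewrite ffunE. Qed.

Lemma dotb_unit u i : dotb u (unitv i) = u i.
Proof.
rewrite /dotb (bigD1 i) //= big1 ?addbF; first by rewrite ffunE eqxx andbT.
by move=> j /negbTE ji; rewrite ffunE ji andbF.
Qed.

Lemma sign_dotb u x :
  (-1) ^+ (dotb u x) = \prod_(i < n) ((-1) ^+ (u i && x i) : algC).
Proof.
rewrite /dotb; apply: (big_morph (fun b : bool => (-1) ^+ b : algC)) => //.
by move=> a b; rewrite signr_addb.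
Qed.

Lemma bvec_neq_exists x y : x != y -> exists i, x i != y i.
Proof.
move=> ne_xy; apply/existsP; apply: contraR ne_xy; rewrite negb_exists.
by move=> /forallP same; apply/eqP/ffunP => i; apply/eqP; rewrite -[_ == _]negbK.
Qed.

End BitVectors.

Lemma sign_conj (b : bool) : ((-1) ^+ b : algC)^* = (-1) ^+ b.
Proof. by rewrite rmorphXn rmorphN1. Qed.

Lemma sign_sq (b : bool) : ((-1) ^+ b : algC) * (-1) ^+ b = 1.
Proof. by rewrite -signr_addb addbb. Qed.

Lemma eq_oppr0 (c : algC) : c = - c -> c = 0.
Proof. by move/eqP; rewrite -addr_eq0 -mulr2n mulrn_eq0 /= => /eqP. Qed.

Section InnerProduct.
Variable n : nat.
Implicit Types (f g h : state n) (C : {set bvec n}) (B : bvec n -> state n).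

Lemma inner_extr f g g' : (forall x, g x = g' x) -> inner f g = inner f g'.
Proof. by move=> eq_g; apply: eq_bigr => x _; rewrite eq_g. Qed.

Lemma inner_extl f f' g : (forall x, f x = f' x) -> inner f g = inner f' g.
Proof. by move=> eq_f; apply: eq_bigr => x _; rewrite eq_f. Qed.

Lemma innerZr f g k : inner f (fun x => k * g x) = k * inner f g.
Proof. by rewrite /inner mulr_sumr; apply: eq_bigr => x _; rewrite mulrCA. Qed.

Lemma innerZl f g k : inner (fun x => k * f x) g = k^* * inner f g.
Proof.
by rewrite /inner mulr_sumr; apply: eq_bigr => x _; rewrite rmorphM mulrA.
Qed.

Lemma inner_sumr g h C B a : (forall x, h x = \sum_(c in C) a c * B c x) ->
  inner g h = \sum_(c in C) a c * inner g (B c).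
Proof.
move=> eq_h; rewrite (inner_extr _ eq_h) /inner.
under eq_bigr do rewrite mulr_sumr.
rewrite exchange_big /=; apply: eq_bigr => c _; rewrite mulr_sumr.
by apply: eq_bigr => x _; rewrite mulrCA.
Qed.

Lemma inner_suml g h C B b : (forall x, g x = \sum_(c in C) b c * B c x) ->
  inner g h = \sum_(c in C) (b c)^* * inner (B c) h.
Proof.
move=> eq_g; rewrite (inner_extl _ eq_g) /inner.
under eq_bigr do rewrite rmorph_sum /= mulr_suml.
rewrite exchange_big /=; apply: eq_bigr => c _; rewrite mulr_sumr.
by apply: eq_bigr => x _; rewrite rmorphM mulrA.
Qed.

Lemma in_span_self C B c : c \in C -> in_span C B (B c).
Proof.
move=> Cc; exists (fun c0 => (c0 == c)%:R) => x.
rewrite (bigD1 c) //= eqxx mul1r big1 ?addr0 // => c0 /andP [_ /negbTE ->].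
by rewrite mul0r.
Qed.

End InnerProduct.

Section CWSBasis.
Variable n : nat.
Implicit Types (v u c w x : bvec n) (s : state n).

Lemma cwsE s c x : cws_vec s c x = (-1) ^+ (dotb c x) * s x.
Proof. by rewrite /cws_vec /pauli_app bxor0. Qed.

Lemma pauli_cws v u s c x :
  pauli_app v u (cws_vec s c) x = (-1) ^+ (dotb c v) * cws_vec (pauli_app v u s) c x.
Proof. by rewrite /pauli_app !cwsE /pauli_app (dotbDr c) signr_addb; ring. Qed.

Lemma Z_cws s w c x : pauli_app (bzero n) w (cws_vec s c) x = cws_vec s (bxor w c) x.
Proof. by rewrite /pauli_app !cwsE bxor0 dotbDl signr_addb mulrA. Qed.

Lemma cws_orthonormal R s c c' : graph_state R s ->
  inner (cws_vec s c') (cws_vec s c) = (c == c')%:R.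
Proof.
case=> stab norm1.
have -> : inner (cws_vec s c') (cws_vec s c) =
          \sum_x (-1) ^+ (dotb (bxor c c') x) * ((s x)^* * s x).
  apply: eq_bigr => x _; rewrite !cwsE rmorphM /= sign_conj dotbDl signr_addb.
  by ring.
have [->|ne] := eqVneq c c'.
  rewrite -norm1; apply: eq_bigr => x _.
  have -> : bxor c' c' = bzero n by apply/ffunP=> i; rewrite !ffunE addbb.
  by rewrite dotb0l mul1r.
set S := \sum_x _.
have [i ne_i] := bvec_neq_exists ne.
have flip x : (s (bxor x (unitv i)))^* * s (bxor x (unitv i)) = (s x)^* * s x.
  have := congr1 (fun h => h x) (stab i); rewrite /gen_app /pauli_app /= => <-.
  by rewrite rmorphM /= sign_conj mulrACA sign_sq mul1r.
have S_opp : S = - S.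
  rewrite {1}/S (reindex_inj (@bxor_inj _ (unitv i))) /= /S -sumrN.
  apply: eq_bigr => x _; rewrite flip dotbDr dotb_unit ffunE.
  have -> : c i (+) c' i = true by move: ne_i; case: (c i); case: (c' i).
  by rewrite signr_addb expr1 mulrN1 mulNr.
exact: eq_oppr0.
Qed.

Lemma cws_basis_orthonormal R s (C : {set bvec n}) : graph_state R s ->
  forall c c', c \in C -> c' \in C -> inner (cws_vec s c') (cws_vec s c) = (c == c')%:R.
Proof. by move=> gs c c' _ _; exact: cws_orthonormal gs. Qed.

(* Distinct codewords c1, c2 are never told apart by detection: Z^(c1+c2)
   maps one basis vector onto the other. *)
Lemma Z_diff_undetectable R s (C : {set bvec n}) c1 c2 : graph_state R s ->
  c1 \in C -> c2 \in C -> c1 != c2 ->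
  ~ detectable C (cws_vec s) (pauli_app (bzero n) (bxor c1 c2)).
Proof.
move=> gs Cc1 Cc2 ne [cE detE]; have := detE _ _ Cc1 Cc2.
rewrite (negbTE ne) (inner_extr _ (Z_cws _ _ _)).
have -> : bxor (bxor c1 c2) c1 = c2.
  by apply/ffunP => i; rewrite !ffunE addbC addbA addbb.
by rewrite (cws_orthonormal _ _ gs) eqxx => /eqP; rewrite oner_eq0.
Qed.

Lemma gen_diag R s c i : graph_state R s ->
  inner (cws_vec s c) (gen_app R i (cws_vec s c)) = (-1) ^+ (c i).
Proof.
move=> gs; rewrite (inner_extr _ (pauli_cws _ _ _ _)).
have -> : pauli_app (unitv i) (adjrow R i) s = s by exact: gs.1 i.
by rewrite innerZr (cws_orthonormal _ _ gs) eqxx mulr1 dotb_unit.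
Qed.

Lemma codewords_agree R s (C : {set bvec n}) i c1 c2 : graph_state R s ->
  detectable C (cws_vec s) (gen_app R i) -> c1 \in C -> c2 \in C -> c1 i = c2 i.
Proof.
move=> gs [cE detE] Cc1 Cc2; apply: (@signr_inj algC).
by rewrite -!(gen_diag _ _ gs) (detE _ _ Cc1 Cc1) (detE _ _ Cc2 Cc2) !eqxx.
Qed.

End CWSBasis.

Section SingleQubit.

Lemma sum_ord2 (F : 'I_2 -> algC) :
  \sum_(i < 2) F i = F (bit_ord false) + F (bit_ord true).
Proof. by rewrite big_ord_recl big_ord1; congr (F _ + F _); apply: val_inj. Qed.

Lemma bit_ord_inj : injective bit_ord.
Proof. by case; case. Qed.

Lemma scalemxE (c : algC) (M : 'M[algC]_2) i j : (c *: M) i j = c * M i j.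
Proof. by rewrite mxE. Qed.

Lemma pmx_entry a b y x :
  pmx a b (bit_ord y) (bit_ord x) = if x == y (+) a then (-1) ^+ (b && x) else 0.
Proof.
rewrite /pmx mxE sum_ord2.
by case: a; case: b; case: y; case: x;
  rewrite /pX /pZ !mxE /= ?mulr0 ?mul0r ?mulr1 ?mul1r ?addr0 ?add0r ?expr1 ?expr0.
Qed.

Lemma pmx_mull a b (M : 'M[algC]_2) y j :
  (pmx a b *m M) (bit_ord y) j = (-1) ^+ (b && (y (+) a)) * M (bit_ord (y (+) a)) j.
Proof.
rewrite mxE sum_ord2 !pmx_entry.
by case: a; case: b; case: y; rewrite /= ?mul0r ?add0r ?addr0.
Qed.

Lemma pmx_mulr a b (M : 'M[algC]_2) i x :
  (M *m pmx a b) i (bit_ord x) = M i (bit_ord (x (+) a)) * (-1) ^+ (b && x).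
Proof.
rewrite mxE sum_ord2 !pmx_entry.
by case: a; case: b; case: x; rewrite /= ?mulr0 ?add0r ?addr0.
Qed.

Lemma pmx00 : pmx false false = 1%:M.
Proof. by rewrite /pmx mulmx1. Qed.

Lemma pmx_neq0 a b : pmx a b != 0.
Proof.
apply/negP => /eqP/matrixP/(_ (bit_ord false) (bit_ord a)).
by rewrite pmx_entry mxE eqxx => /eqP; rewrite signr_eq0.
Qed.

(* Nonzero multiples of distinct Paulis are distinct: the X-part is read off
   the support of a row, the Z-part off the ratio of the two nonzero entries. *)
Lemma pmx_scale_inj a1 b1 a2 b2 (c1 c2 : algC) : c1 != 0 ->
  c1 *: pmx a1 b1 = c2 *: pmx a2 b2 -> (a1, b1) = (a2, b2).
Proof.
move=> c1_neq0 /matrixP eqM.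
have entry y x : c1 * (if x == y (+) a1 then (-1) ^+ (b1 && x) else 0) =
                 c2 * (if x == y (+) a2 then (-1) ^+ (b2 && x) else 0).
  by have := eqM (bit_ord y) (bit_ord x); rewrite !scalemxE !pmx_entry.
have ea : a1 = a2.
  have := entry false a1; rewrite eqxx /=; case: eqP => // _.
  by rewrite mulr0 => /eqP; rewrite mulf_eq0 signr_eq0 orbF (negbTE c1_neq0).
rewrite -{}ea {eqM} in entry *.
have diag y : c1 * (-1) ^+ (b1 && (y (+) a1)) = c2 * (-1) ^+ (b2 && (y (+) a1)).
  by have := entry y (y (+) a1); rewrite !eqxx.
have split_sign b : (-1) ^+ (b && (false (+) a1)) * (-1) ^+ (b && (true (+) a1)) =
                    (-1) ^+ b :> algC.
  by case: (a1); case: b; rewrite /= ?expr0 ?mulr1 ?mul1r.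
have sq_eq : c1 ^+ 2 = c2 ^+ 2.
  transitivity ((c1 * (-1) ^+ (b1 && (false (+) a1))) ^+ 2).
    by rewrite exprMn sqrr_sign mulr1.
  by rewrite diag exprMn sqrr_sign mulr1.
have prod_eq : c1 ^+ 2 * (-1) ^+ b1 = c2 ^+ 2 * (-1) ^+ b2.
  rewrite -(split_sign b1) -(split_sign b2); transitivity ((c1 * (-1) ^+ (b1 && (false (+) a1))) *
                                      (c1 * (-1) ^+ (b1 && (true (+) a1)))).
    by ring.
  by rewrite (diag false) (diag true); ring.
move: prod_eq; rewrite -sq_eq => /(mulfI (expf_neq0 2 c1_neq0)) /signr_inj.
by move=> ->.
Qed.

(* Conjugation by U permutes
   the four Paulis up to phases (it is injective on a finite set) and fixes
   the identity. *)
Lemma clifford_pullback U : clifford1 U -> forall a' b', exists a b (l : algC),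
  pmx a' b' *m U = l *: (U *m pmx a b) /\ (a || b) = (a' || b').
Proof.
case=> U_unitary U_conj.
have U_unitary' : adj2 U *m U = 1%:M by apply: mulmx1C.
have conj_back P M : U *m P *m adj2 U = M -> P = adj2 U *m M *m U.
  by move=> <-; rewrite !mulmxA U_unitary' mul1mx -mulmxA U_unitary' mulmx1.
have /fin_all_exists [F FP] (ab : bool * bool) : exists t : bool * bool * algC,
    U *m pmx ab.1 ab.2 *m adj2 U = t.2 *: pmx t.1.1 t.1.2.
  by have [a' [b' [c E]]] := U_conj ab.1 ab.2; exists (a', b', c).
have phase_neq0 ab : (F ab).2 != 0.
  apply/negP => /eqP phase0; move: (conj_back _ _ (FP ab)).
  rewrite phase0 scale0r mulmx0 mul0mx => /eqP; exact/negP/pmx_neq0.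
pose G ab := (F ab).1.
have G_inj : injective G.
  move=> [a1 b1] [a2 b2]; rewrite /G => eqG.
  have /= E1 := conj_back _ _ (FP (a1, b1)).
  have /= E2 := conj_back _ _ (FP (a2, b2)).
  rewrite eqG in E1; apply: (pmx_scale_inj (phase_neq0 (a2, b2))).
  by rewrite E1 E2 -!scalemxAr -!scalemxAl !scalerA mulrC.
have G00 : G (false, false) = (false, false).
  move: (FP (false, false)); rewrite /G pmx00 mulmx1 U_unitary -(scale1r 1%:M) -pmx00.
  by case: (F _) => [[x y] c] /= /pmx_scale_inj; rewrite oner_neq0 => /(_ isT) <-.
have [Ginv GK KG] := injF_bij G_inj.
move=> a' b'; set ab := Ginv (a', b').
have Gab : G ab = (a', b') by rewrite /ab KG.
have id_iff : (ab == (false, false)) = ((a', b') == (false, false)).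
  by rewrite -(inj_eq G_inj) G00 Gab.
have /= E : U *m pmx ab.1 ab.2 *m adj2 U = (F ab).2 *: pmx (a', b').1 (a', b').2.
  by rewrite -Gab; exact: FP.
exists ab.1, ab.2, (F ab).2^-1; split.
  have -> : U *m pmx ab.1 ab.2 = (F ab).2 *: (pmx a' b' *m U).
    by rewrite scalemxAl -E -!mulmxA U_unitary' mulmx1.
  by rewrite scalerA mulVf ?phase_neq0 // scale1r.
by move: id_iff; case: (ab) => a b; case: a; case: b; case: (a'); case: (b').
Qed.

End SingleQubit.
Section LocalCliffords.
Variable n : nat.
Implicit Types (v u x y : bvec n) (f g : state n) (U : 'I_n -> 'M[algC]_2).

Lemma local_op_ext U f f' y : (forall x, f x = f' x) -> local_op U f y = local_op U f' y.
Proof. by move=> eq_f; apply: eq_bigr => x _; rewrite eq_f. Qed.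

Lemma local_conj U v' u' v u (l : 'I_n -> algC) :
  (forall k, pmx (v' k) (u' k) *m U k = l k *: (U k *m pmx (v k) (u k))) ->
  forall f y, pauli_app v' u' (local_op U f) y =
              (\prod_(k < n) l k) * local_op U (pauli_app v u f) y.
Proof.
move=> conjU f y; rewrite /pauli_app /local_op.
rewrite (reindex_inj (@bxor_inj _ v)) /= mulr_sumr mulr_sumr.
apply: eq_bigr => x _; rewrite !mulrA; congr (_ * _).
have qubit k : (-1) ^+ (u' k && bxor y v' k) *
    U k (bit_ord (bxor y v' k)) (bit_ord (bxor x v k)) =
    l k * U k (bit_ord (y k)) (bit_ord (x k)) * (-1) ^+ (u k && bxor x v k).
  have := congr1 (fun M : 'M[algC]_2 => M (bit_ord (y k)) (bit_ord (bxor x v k))) (conjU k).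
  by rewrite /= pmx_mull scalemxE pmx_mulr !ffunE addbK => ->; ring.
by rewrite !sign_dotb -big_split (eq_bigr _ (fun k _ => qubit k)) !big_split.
Qed.

Lemma local_overlap U (y z : bvec n) :
  \sum_(x : bvec n) \prod_(k < n) ((U k (bit_ord (x k)) (bit_ord (y k)))^* *
                                    U k (bit_ord (x k)) (bit_ord (z k))) =
  \prod_(k < n) (adj2 (U k) *m U k) (bit_ord (y k)) (bit_ord (z k)).
Proof.
rewrite -(bigA_distr_bigA (fun k b => (U k (bit_ord b) (bit_ord (y k)))^* *
                                        U k (bit_ord b) (bit_ord (z k)))) /=.
apply: eq_bigr => k _; rewrite mxE sum_ord2 big_bool /= addrC.
by congr (_ + _); rewrite /adj2 !mxE.
Qed.

Lemma prod_eq_bits (y z : bvec n) :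
  \prod_(k < n) ((y k == z k)%:R : algC) = (y == z)%:R.
Proof.
have [->|/bvec_neq_exists [k ne_k]] := eqVneq y z.
  by rewrite big1 // => k _; rewrite eqxx.
by rewrite (bigD1 k) //= (negbTE ne_k) mul0r.
Qed.

Lemma local_unitary U : (forall k, adj2 (U k) *m U k = 1%:M) ->
  forall f g, inner (local_op U f) (local_op U g) = inner f g.
Proof.
move=> unitU f g; rewrite /inner /local_op.
under eq_bigr do rewrite rmorph_sum /= mulr_suml.
under eq_bigr do under eq_bigr do rewrite mulr_sumr.
rewrite exchange_big /=; apply: eq_bigr => y _; rewrite exchange_big /=.
transitivity (\sum_z ((y == z)%:R * ((f y)^* * g z))); last first.
  rewrite (bigD1 y) //= eqxx mul1r big1 ?addr0 // => z.
  by rewrite eq_sym => /negbTE ->; rewrite mul0r.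
apply: eq_bigr => z _.
have -> : (y == z)%:R = \prod_(k < n) (adj2 (U k) *m U k) (bit_ord (y k)) (bit_ord (z k)).
  rewrite -prod_eq_bits; apply: eq_bigr => k _.
  by rewrite unitU mxE (inj_eq bit_ord_inj).
rewrite -local_overlap mulr_suml; apply: eq_bigr => x _.
by rewrite rmorphM rmorph_prod /= big_split /= mulrACA.
Qed.

Definition permv (p : 'S_n) (x : bvec n) : bvec n := [ffun i => x (p i)].

Lemma permv_inj p : injective (permv p).
Proof.
move=> x y /ffunP eq_xy; apply/ffunP => j.
by have := eq_xy (p^-1 j)%g; rewrite !ffunE permKV.
Qed.

Lemma perm_unitary p f g : inner (perm_op p f) (perm_op p g) = inner f g.
Proof. by rewrite /inner [RHS](reindex_inj (@permv_inj p)). Qed.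

Lemma permv_xor p x y : permv p (bxor x y) = bxor (permv p x) (permv p y).
Proof. by apply/ffunP => i; rewrite !ffunE. Qed.

Lemma dotb_perm p u x : dotb (permv p u) (permv p x) = dotb u x.
Proof.
rewrite /dotb [RHS](reindex_inj (@perm_inj _ p)) /=.
by apply: eq_bigr => i _; rewrite !ffunE.
Qed.

Lemma perm_conj p v u f y :
  pauli_app v u (perm_op p f) y = perm_op p (pauli_app (permv p v) (permv p u) f) y.
Proof.
rewrite /pauli_app /perm_op.
have -> : [ffun i => bxor y v (p i)] = bxor (permv p y) (permv p v) by rewrite -permv_xor.
by rewrite -permv_xor dotb_perm.
Qed.

Lemma pweight_perm p v u : pweight (permv p v) (permv p u) = pweight v u.
Proof.
rewrite /pweight -!sum1_card [RHS](reindex_inj (@perm_inj _ p)) /=.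
by apply: eq_bigl => i; rewrite !inE !ffunE.
Qed.

Definition lc_map p U (f : state n) : state n := local_op U (perm_op p f).

Lemma lc_unitary p U : (forall k, clifford1 (U k)) ->
  forall f g, inner (lc_map p U f) (lc_map p U g) = inner f g.
Proof.
move=> cliffU f g; rewrite /lc_map local_unitary ?perm_unitary // => k.
by case: (cliffU k) => unitU _; apply: mulmx1C.
Qed.

Lemma lc_pullback p U : (forall k, clifford1 (U k)) ->
  forall v' u', exists v u (lam : algC), pweight v u = pweight v' u' /\
    forall f y, pauli_app v' u' (lc_map p U f) y = lam * lc_map p U (pauli_app v u f) y.
Proof.
move=> cliffU v' u'.
have /fin_all_exists [t tP] k : exists t : bool * bool * algC,
    pmx (v' k) (u' k) *m U k = t.2 *: (U k *m pmx t.1.1 t.1.2) /\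
    (t.1.1 || t.1.2) = (v' k || u' k).
  by have [a [b [l [E W]]]] := clifford_pullback (cliffU k) (v' k) (u' k); exists (a, b, l).
pose v1 : bvec n := [ffun k => (t k).1.1].
pose u1 : bvec n := [ffun k => (t k).1.2].
exists (permv p v1), (permv p u1), (\prod_k (t k).2); split.
  rewrite pweight_perm /pweight; apply: eq_card => k; rewrite !inE !ffunE.
  by case: (tP k).
move=> f y; rewrite /lc_map (@local_conj U v' u' v1 u1 (fun k => (t k).2)).
  by congr (_ * _); apply: local_op_ext => x; rewrite perm_conj.
by move=> k; case: (tP k) => -> _; rewrite !ffunE.
Qed.

End LocalCliffords.

Section Transfer.
Variables (n : nat) (C C' : {set bvec n}) (B B' : bvec n -> state n).
Variable T : state n -> state n.
Hypothesis orthoB : forall c c', c \in C -> c' \in C -> inner (B c') (B c) = (c == c')%:R.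
Hypothesis orthoB' : forall c c', c \in C' -> c' \in C' -> inner (B' c') (B' c) = (c == c')%:R.
Hypothesis unitaryT : forall f g, inner (T f) (T g) = inner f g.

Lemma natr_if (b : bool) : b%:R = (if b then 1 else 0) :> algC.
Proof. by case: b. Qed.

Lemma sum_delta (F : bvec n -> algC) c0 (e : algC) : c0 \in C ->
  \sum_(c in C) F c * (if c == c0 then e else 0) = F c0 * e.
Proof.
move=> Cc0; rewrite (bigD1 c0) //= eqxx big1 ?addr0 // => c /andP [_ /negbTE ->].
by rewrite mulr0.
Qed.

Lemma detectable_transfer (E E' : state n -> state n) (lam : algC) :
  (forall f y, E' (T f) y = lam * T (E f) y) ->
  (forall f a, (forall x, f x = \sum_(c in C) a c * B c x) ->
      forall y, E f y = \sum_(c in C) a c * E (B c) y) ->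
  (forall g, in_span C' B' g -> exists f, in_span C B f /\ g = T f) ->
  detectable C B E -> detectable C' B' E'.
Proof.
move=> conjE linE onto [cE detE].
have E_compress f g : in_span C B f -> in_span C B g -> inner g (E f) = cE * inner g f.
  move=> [a eq_f] [b eq_g].
  rewrite (inner_suml _ eq_g) (inner_suml _ eq_g) mulr_sumr.
  apply: eq_bigr => c0 Cc0; rewrite (inner_sumr _ (linE f a eq_f)) (inner_sumr _ eq_f).
  under eq_bigr => c1 Cc1 do rewrite (detE _ _ Cc1 Cc0).
  under [X in _ = _ * (_ * X)]eq_bigr => c1 Cc1 do rewrite (orthoB Cc1 Cc0) natr_if.
  by rewrite !sum_delta //; ring.
exists (lam * cE) => c c' Cc Cc'.
have [f [span_f eq_f]] := onto _ (in_span_self B' Cc).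
have [g [span_g eq_g]] := onto _ (in_span_self B' Cc').
rewrite eq_g eq_f (inner_extr _ (conjE f)) innerZr unitaryT E_compress // -unitaryT.
by rewrite -eq_g -eq_f (orthoB' Cc Cc'); case: (c == c'); rewrite ?mulr1 ?mulr0.
Qed.

(* If T maps span C into span C', then C' has two distinct words whenever C
   has: the images of two orthonormal vectors cannot lie on one line. *)
Lemma transfer_two_words c1 c2 :
  (forall f, in_span C B f -> in_span C' B' (T f)) ->
  c1 \in C -> c2 \in C -> c1 != c2 ->
  exists c1' c2', [/\ c1' \in C', c2' \in C' & c1' != c2'].
Proof.
move=> into Cc1 Cc2 ne.
have [|C'_small] := boolP (1 < #|C'|)%N; first by move/card_gt1P.
have [a1 span1] := into _ (in_span_self B Cc1).
have [a2 span2] := into _ (in_span_self B Cc2).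
have norm1 : inner (T (B c1)) (T (B c1)) = 1 by rewrite unitaryT orthoB // eqxx.
have norm2 : inner (T (B c2)) (T (B c2)) = 1 by rewrite unitaryT orthoB // eqxx.
have orth12 : inner (T (B c1)) (T (B c2)) = 0.
  by rewrite unitaryT orthoB // eq_sym (negbTE ne).
have [C'0 | [c0 C'c0]] := set_0Vmem C'.
  by move: norm1; rewrite (inner_sumr _ span1) C'0 big_set0 => /eqP; rewrite eq_sym oner_eq0.
have only_c0 c : c \in C' -> c = c0.
  move=> C'c; apply/eqP; apply: contraNT C'_small => ne_c.
  by apply/card_gt1P; exists c, c0.
have on_c0 a x : \sum_(c in C') a c * B' c x = a c0 * B' c0 x.
  rewrite (bigD1 c0) //= big1 ?addr0 // => c /andP [C'c].
  by rewrite (only_c0 _ C'c) eqxx.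
have e1 x : T (B c1) x = a1 c0 * B' c0 x by rewrite span1 on_c0.
have e2 x : T (B c2) x = a2 c0 * B' c0 x by rewrite span2 on_c0.
have unit_c0 : inner (B' c0) (B' c0) = 1 by rewrite orthoB' // eqxx.
have coef g1 g2 k1 k2 : (forall x, g1 x = k1 * B' c0 x) ->
    (forall x, g2 x = k2 * B' c0 x) -> inner g1 g2 = k1^* * k2.
  move=> eq1 eq2; rewrite (inner_extl _ eq1) (inner_extr _ eq2).
  by rewrite innerZl innerZr unit_c0 mulr1.
have /eqP := coef _ _ _ _ e1 e2; rewrite orth12 eq_sym mulf_eq0 => /orP [] /eqP a_eq0.
  by move: norm1; rewrite (coef _ _ _ _ e1 e1) a_eq0 mul0r => /eqP; rewrite eq_sym oner_eq0.
by move: norm2; rewrite (coef _ _ _ _ e2 e2) a_eq0 mulr0 => /eqP; rewrite eq_sym oner_eq0.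
Qed.

End Transfer.

Section LCEquivalentCodes.
Variables (n : nat) (R R' : 'I_n -> 'I_n -> bool) (s s' : state n).
Variables (C C' : {set bvec n}).
Hypothesis graph_s : graph_state R s.
Hypothesis graph_s' : graph_state R' s'.
Hypothesis lc_equiv : LC_equiv C (cws_vec s) C' (cws_vec s').

Lemma lc_low_weight_detectable d :
  (forall v u, (pweight v u < d)%N -> detectable C (cws_vec s) (pauli_app v u)) ->
  forall v' u', (pweight v' u' < d)%N -> detectable C' (cws_vec s') (pauli_app v' u').
Proof.
move=> det v' u' low; have [p [U [cliffU [_ onto]]]] := lc_equiv.
have [v [u [lam [eq_wt conj]]]] := lc_pullback p cliffU v' u'.
apply: (detectable_transfer (cws_basis_orthonormal graph_s)
          (cws_basis_orthonormal graph_s') (lc_unitary p cliffU) conj _ onto).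
  move=> f a eq_f y; rewrite /pauli_app eq_f mulr_sumr.
  by apply: eq_bigr => c _; rewrite mulrCA.
by apply: det; rewrite eq_wt.
Qed.

Lemma lc_two_codewords : (1 < #|C|)%N ->
  exists c1 c2, [/\ c1 \in C', c2 \in C' & c1 != c2].
Proof.
move=> /card_gt1P [c1 [c2 [Cc1 Cc2 ne]]]; have [p [U [cliffU [into _]]]] := lc_equiv.
exact: (transfer_two_words (cws_basis_orthonormal graph_s) (cws_basis_orthonormal graph_s') (lc_unitary p cliffU)
          into Cc1 Cc2 ne).
Qed.

End LCEquivalentCodes.

Lemma count_sorted_ge (l : seq nat) k d : sorted geq l -> (nth 0 l k < d)%N ->
  (count (leq d) l <= k)%N.
Proof.
move=> sorted_l small_k; have [k_lt|k_ge] := ltnP k (size l); last first.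
  exact: leq_trans (count_size _ _) k_ge.
rewrite -(cat_take_drop k l) count_cat.
have -> : count (leq d) (drop k l) = 0%N.
  apply/eqP; rewrite -leqn0 leqNgt -has_count; apply/hasPn => x /(nthP 0) [j j_lt <-].
  rewrite nth_drop -ltnNge; apply: leq_ltn_trans small_k.
  have geq_trans : transitive geq by move=> a b c /= ba cb; apply: leq_trans cb ba.
  apply: (sorted_leq_nth geq_trans (fun a => leqnn a) 0 sorted_l); rewrite ?inE ?leq_addr //.
  by rewrite size_drop in j_lt; rewrite -ltn_subRL.
by rewrite addn0 (leq_trans (count_size _ _)) // size_take k_lt.
Qed.

Lemma few_heavy_generators n (R : 'I_n -> 'I_n -> bool) d :
  (dth_largest_gen_weight R d < d)%N -> (#|[pred i | (d <= gen_weight R i)%N]| < d)%N.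
Proof.
move=> small; have d_gt0 : (0 < d)%N by apply: leq_ltn_trans small.
have -> : #|[pred i | (d <= gen_weight R i)%N]| =
          count (leq d) (sort geq [seq gen_weight R i | i <- enum 'I_n]).
  by rewrite count_sort count_map enumT cardE /enum_mem size_filter.
apply: leq_ltn_trans (count_sorted_ge _ small) _; last by rewrite prednK.
by apply: sort_sorted => a b; apply: leq_total.
Qed.

Theorem theorem3 (n : nat)
  (R : 'I_n -> 'I_n -> bool) (s : state n) (C : {set bvec n}) (d : nat)
  (R' : 'I_n -> 'I_n -> bool) (s' : state n) (C' : {set bvec n}) :
  is_graph R -> graph_state R s -> (2 <= #|C|)%N ->
  is_distance C (cws_vec s) d ->
  is_graph R' -> graph_state R' s' ->
  LC_equiv C (cws_vec s) C' (cws_vec s') ->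
  (d <= dth_largest_gen_weight R' d)%N.
Proof.
move=> _ graph_s two_words [_ low_detect] _ graph_s' lc_equiv.
rewrite leqNgt; apply/negP => small.
have low_detect' := lc_low_weight_detectable graph_s graph_s' lc_equiv low_detect.
have [x1 [x2 [C'x1 C'x2 ne]]] := lc_two_codewords graph_s graph_s' lc_equiv two_words.
have light_agree i : (gen_weight R' i < d)%N -> x1 i = x2 i.
  by move=> light; exact: codewords_agree graph_s' (low_detect' _ _ light) C'x1 C'x2.
(* Z^(x1+x2) is undetectable, yet it only acts on the fewer than d heavy qubits. *)
apply: (Z_diff_undetectable graph_s' C'x1 C'x2 ne); apply: low_detect'.
apply: leq_ltn_trans (few_heavy_generators small).
apply: subset_leq_card; apply/subsetP => i; rewrite !inE !ffunE /= => differ.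
by rewrite leqNgt; apply: contraL differ => /light_agree ->; rewrite addbb.
Qed.
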